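(* Let $(b,w)\in\mathbb{N}^2$ (where $\mathbb{N}=\{0,1,2,\dots\}$). Then there exists a partition $\lambda$ such that $(b(\lambda),w(\lambda))=(b,w)$ if and only if \[(b-w)^2\le b.\] Furthermore, the same statement holds if one restricts to partitions into distinct parts.
   Context: A partition is a finite nonincreasing sequence $\lambda=(\lambda_1,\lambda_2,\dots,\lambda_r)$ of positive integers (the empty sequence is the unique partition of $0$); set $\lambda_i=0$ for $i<1$ and $i>r$. A partition is into distinct parts if all $\lambda_i$ are distinct. Its Ferrers graph consists of unit squares, with row $i$ (rows indexed from $i=0$) containing $\lambda_{i+1}$ squares, left-justified, columns indexed from $0$. Colour the square in row $r$ and column $c$ black if $r+c$ is even and white if $r+c$ is odd (chess colouring, the corner square in row $0$, column $0$ being black). Then $b(\lambda)$ is the number of black squares and $w(\lambda)$ the number of white squares; explicitly $b(\lambda)=\sum_{j}\lceil \lambda_{2j+1}/2\rceil+\sum_j\lfloor \lambda_{2j}/2\rfloor$ and $w(\lambda)=\sum_{j}\lfloor \lambda_{2j+1}/2\rfloor+\sum_j\lceil \lambda_{2j}/2\rceil$. *)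

From mathcomp Require Import all_boot all_order all_algebra.
Set Implicit Arguments. Unset Strict Implicit. Unset Printing Implicit Defensive.

Definition is_partition (lam : seq nat) : bool :=
  sorted geq lam && all (fun x => 0 < x) lam.

Definition distinct_parts (lam : seq nat) : bool := uniq lam.

(* Ferrers graph: row r (0-indexed) holds nth 0 lam r squares, columns 0..;
   square (r, c) is black iff r + c is even. *)
Definition black (lam : seq nat) : nat :=
  \sum_(r < size lam) \sum_(c < nth 0 lam r) ~~ odd (r + c).
Definition white (lam : seq nat) : nat :=
  \sum_(r < size lam) \sum_(c < nth 0 lam r) odd (r + c).

From mathcomp Require Import all_boot all_order all_algebra.
From mathcomp Require Import zify.
Import GRing.Theory Num.Theory.

(* Write d = b - w.  Removing the first row of a Ferrers graph swaps the two
   colours, so prepending a largest part x turns d into odd x - d, while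
   b + w is the size of the partition.  Adding the parts from the smallest to
   the largest, one shows by induction that the largest part is at least
   max (2d - 1, -2d) and that the size is at least d (2d - 1); the last bound
   is exactly (b - w)^2 <= b.  Conversely the staircase (k, k-1, ..., 1) with
   k = 2d - 1 or k = -2d has b = d^2 and w = d^2 - d, and enlarging its largest
   part by 2m adds m squares of each colour; this reaches every admissible
   (b, w) with a partition into distinct parts. *)

Lemma sum_odd_ord n : \sum_(c < n) odd c = n./2.
Proof. by elim: n => [|n IH]; rewrite ?big_ord0 // big_ord_recr /= IH; lia. Qed.

Lemma sum_even_ord n : \sum_(c < n) ~~ odd c = uphalf n.
Proof. by elim: n => [|n IH]; rewrite ?big_ord0 // big_ord_recr /= IH; lia. Qed.

Lemma black_nil : black [::] = 0.
Proof. by rewrite /black big_ord0. Qed.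

Lemma white_nil : white [::] = 0.
Proof. by rewrite /white big_ord0. Qed.

Lemma black_cons x l : black (x :: l) = uphalf x + white l.
Proof.
rewrite /black /white big_ord_recl /= -sum_even_ord.
by congr (_ + _); apply: eq_bigr => r _; apply: eq_bigr => c _; rewrite negbK.
Qed.

Lemma white_cons x l : white (x :: l) = x./2 + black l.
Proof. by rewrite /black /white big_ord_recl /= -sum_odd_ord. Qed.

Lemma black_add_white l : black l + white l = sumn l.
Proof.
elim: l => [|x l IH]; first by rewrite black_nil white_nil.
by rewrite black_cons white_cons /= -IH; lia.
Qed.

Definition strict_partition (l : seq nat) : bool :=
  sorted gtn l && all (fun x => 0 < x) l.

Lemma strict_partition_distinct l :
  strict_partition l -> is_partition l /\ distinct_parts l.
Proof.
case/andP; rewrite gtn_sorted_uniq_geq => /andP[uniq_l sorted_l] pos_l.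
by split=> //; apply/andP.
Qed.

Fixpoint stair (k : nat) : seq nat :=
  if k is k'.+1 then k :: stair k' else [::].

Lemma strict_partition_stair k : strict_partition (stair k).
Proof.
rewrite /strict_partition; elim: k => [|[|k] IH] //=.
by move: IH => /= /andP[-> ->]; rewrite ltnSn.
Qed.

Lemma black_white_stair k :
  black (stair k) = uphalf k ^ 2 /\ white (stair k) = k./2 * (k./2).+1.
Proof.
elim: k => [|k [IHb IHw]]; first by rewrite black_nil white_nil.
by rewrite /= black_cons white_cons IHb IHw; split; nia.
Qed.

Definition raise_head (m : nat) (l : seq nat) : seq nat :=
  if l is x :: l' then x + m.*2 :: l' else if m is 0 then [::] else [:: m.*2].

Lemma black_raise_head m l : black (raise_head m l) = black l + m.
Proof.
case: l => [|x l] /=; last by rewrite !black_cons; lia.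
by case: m => [|m]; rewrite ?black_cons black_nil ?white_nil //; lia.
Qed.

Lemma white_raise_head m l : white (raise_head m l) = white l + m.
Proof.
case: l => [|x l] /=; last by rewrite !white_cons; lia.
by case: m => [|m]; rewrite ?white_cons white_nil ?black_nil //; lia.
Qed.

Lemma strict_partition_raise_head m l :
  strict_partition l -> strict_partition (raise_head m l).
Proof.
case: l => [|x l] /=; first by case: m.
case/andP=> /= sorted_xl /andP[x_gt0 pos_l]; rewrite /strict_partition /= pos_l.
case: l sorted_xl {pos_l} => [|y l] /=; first by lia.
by case/andP=> y_lt_x ->; rewrite !andbT; lia.
Qed.

Local Open Scope ring_scope.

Definition excess (l : seq nat) : int := (black l)%:Z - (white l)%:Z.

Lemma excess_cons x l : excess (x :: l) = (odd x)%:Z - excess l.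
Proof. by rewrite /excess black_cons white_cons; lia. Qed.

Lemma excess_bound l : sorted geq l ->
  [/\ 2 * excess l - 1 <= head 0%N l, - (2 * excess l) <= head 0%N l
    & 2 * excess l ^+ 2 - excess l <= sumn l].
Proof.
elim: l => [|x l IH] /=; first by rewrite /excess black_nil white_nil.
move=> sorted_xl; have [h1 h2 h3] := IH (path_sorted sorted_xl).
have le_hx : (head 0 l <= x)%N.
  by case: l sorted_xl {IH h1 h2 h3} => //= y l /andP[].
rewrite excess_cons; move: (excess l) h1 h2 h3 => d h1 h2 h3.
(* Parity: -2d <= x with x odd forces 1 - 2d <= x, and 2d - 1 <= x with
   x even forces 2d <= x. *)
by case odd_x: (odd x); split; nia.
Qed.

Lemma sqr_excess_le_black l : sorted geq l -> excess l ^+ 2 <= black l.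
Proof.
case/excess_bound => _ _; rewrite -black_add_white.
have : excess l = (black l)%:Z - (white l)%:Z by [].
by move: (excess l) => d; lia.
Qed.

Lemma stair_black_white_excess (d : int) :
  exists k, (black (stair k))%:Z = d ^+ 2 /\ (white (stair k))%:Z = d ^+ 2 - d.
Proof.
have stairE k := black_white_stair k.
case: d => [[|j]|j].
- by exists 0%N; rewrite black_nil white_nil.
- by exists j.*2.+1; have [-> ->] := stairE j.*2.+1; split; nia.
- by exists j.+1.*2; have [-> ->] := stairE j.+1.*2; rewrite NegzE; split; nia.
Qed.

Lemma strict_partition_of_sqr_le (b w : nat) : (b%:Z - w%:Z) ^+ 2 <= b%:Z ->
  exists2 lam, strict_partition lam & black lam = b /\ white lam = w.
Proof.
move=> le_sqr_b.
have [k [black_k white_k]] := stair_black_white_excess (b%:Z - w%:Z).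
exists (raise_head (b - black (stair k)) (stair k)).
  exact/strict_partition_raise_head/strict_partition_stair.
by rewrite black_raise_head white_raise_head; split; lia.
Qed.

Theorem theoremA (b w : nat) :
  ((exists lam : seq nat, is_partition lam /\ black lam = b /\ white lam = w)
     <-> ((b%:Z - w%:Z) ^+ 2 <= b%:Z))
  /\
  ((exists lam : seq nat, [/\ is_partition lam, distinct_parts lam,
                              black lam = b & white lam = w])
     <-> ((b%:Z - w%:Z) ^+ 2 <= b%:Z)).
Proof.
have necessary lam : is_partition lam ->
    ((black lam)%:Z - (white lam)%:Z) ^+ 2 <= (black lam)%:Z.
  by case/andP => /sqr_excess_le_black.
split; split.
- by case=> lam [/necessary + [<- <-]].
- case/strict_partition_of_sqr_le => lam /strict_partition_distinct[? _] [? ?].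
  by exists lam.
- by case=> lam [/necessary + _ <- <-].
- case/strict_partition_of_sqr_le => lam /strict_partition_distinct[? ?] [? ?].
  by exists lam.
Qed.
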